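(* Let $N,K\ge 2$ ... more precisely, let $N\ge1$, $K\ge 1$, and let $\mathcal{P}$ be a probability distribution on pairs $(a_h,f_h)\in\mathcal{A}\times\mathcal{F}\subseteq\mathbb{R}^N\times\mathbb{R}^N$. For each $(a_h,f_h)$ let $\mathcal{L}_h^a\in\mathbb{R}^{N\times N}$ be the associated linear discrete operator, let $u_h=\mathcal{G}_h(a_h,f_h)$ be the discrete solution (a measurable function of $(a_h,f_h)$), and let $u_h^{(t)}=U_t(a_h,f_h)\in\mathcal{U}$ be the current iterate, a fixed measurable function of $(a_h,f_h)$. Let $C_1,\dots,C_K:\mathbb{R}^N\to\mathbb{R}^N$ be arbitrary (measurable) solver maps and set $$\tilde c_j=\tilde c_j(a_h,u_h^{(t)},u_h)=\bigl\|(I-C_j\circ\mathcal{L}_h^a)(u_h-u_h^{(t)})\bigr\|_2^2,\quad j\in[K].$$ Assume there are constants $0<E_{\min}$ and $\bar E<\infty$ such that, for $\mathcal{P}$-almost every $(a_h,f_h)$, $\tilde c_j<\bar E$ for all $j\in[K]$ and $\tilde c_j>E_{\min}$ for at least one $j\in[K]$. Then $\Psi$ is a Bayes-consistent surrogate for $l_{\text{route}}$: for every sequence of measurable score functions $\mathbf g_n=(g_{n,1},\dots,g_{n,K})$ with $\mathcal{R}_\Psi(\mathbf g_n)\to\mathcal{R}_\Psi^*$, the induced routers $r_n=\operatorname{argmax}_{j\in[K]}g_{n,j}$ satisfy $\mathcal{R}_{\text{route}}(r_n)\to\mathcal{R}_{\text{route}}^*$.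
   Context: Inputs are $x=(a_h,f_h,u_h^{(t)})\in\mathcal{A}\times\mathcal{F}\times\mathcal{U}$. A score function is $\mathbf g=(g_1,\dots,g_K)$ with $g_j:\mathcal{A}\times\mathcal{F}\times\mathcal{U}\to\mathbb{R}$; its induced router is $r(x)=\operatorname{argmax}_{j\in[K]}g_j(x)$ (ties broken by any fixed rule). The routing loss is $l_{\text{route}}(r,a_h,f_h,u_h^{(t)},u_h)=\sum_{j=1}^K\tilde c_j\,\mathbf 1_{r(a_h,f_h,u_h^{(t)})=j}$, and the surrogate loss is $$\Psi(\mathbf g,a_h,f_h,u_h^{(t)},u_h)=-\sum_{j=1}^K\sum_{k=1}^K\tilde c_k\,\mathbf 1_{k\ne j}\log\left(\frac{\exp(g_j(a_h,f_h,u_h^{(t)}))}{\sum_{m=1}^K\exp(g_m(a_h,f_h,u_h^{(t)}))}\right).$$ Risks: $\mathcal{R}_{\text{route}}(r)=\mathbb{E}_{(a_h,f_h)\sim\mathcal{P}}[l_{\text{route}}(r,a_h,f_h,u_h^{(t)},u_h)]$ and $\mathcal{R}_\Psi(\mathbf g)=\mathbb{E}_{(a_h,f_h)\sim\mathcal{P}}[\Psi(\mathbf g,a_h,f_h,u_h^{(t)},u_h)]$, with $u_h^{(t)}=U_t(a_h,f_h)$ and $u_h=\mathcal{G}_h(a_h,f_h)$; $\mathcal{R}_{\text{route}}^*$ and $\mathcal{R}_\Psi^*$ denote the infima of these risks over all measurable routers, resp. all measurable score functions. *)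

From HB Require Import structures.
From mathcomp Require Import all_boot all_order all_algebra.
From mathcomp Require Import all_classical all_reals all_analysis.
Set Implicit Arguments. Unset Strict Implicit. Unset Printing Implicit Defensive.
Import Order.TTheory GRing.Theory Num.Theory.
Local Open Scope classical_set_scope.
Local Open Scope ring_scope.

(* R^N is modelled by N.-tuple R, which carries the product (= Borel)
   sigma-algebra of MathComp-Analysis. *)

Definition sqnorm (R : realType) (N : nat) (v : N.-tuple R) : R :=
  \sum_(i < N) tnth v i ^+ 2.

Definition vsub (R : realType) (N : nat) (v w : N.-tuple R) : N.-tuple R :=
  [tuple tnth v i - tnth w i | i < N].

Definition matvec (R : realType) (N : nat) (M : 'M[R]_N) (v : N.-tuple R)
  : N.-tuple R :=
  [tuple \sum_(j < N) M i j * tnth v j | i < N].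

Definition cost (R : realType) (N K : nat)
  (L : N.-tuple R -> 'M[R]_N)
  (C : 'I_K -> N.-tuple R -> N.-tuple R)
  (G Ut : N.-tuple R * N.-tuple R -> N.-tuple R)
  (j : 'I_K) (af : N.-tuple R * N.-tuple R) : R :=
  let w := vsub (G af) (Ut af) in
  sqnorm (vsub w (C j (matvec (L af.1) w))).

Definition route_loss (R : realType) (K : nat) (c : 'I_K -> R) (j : 'I_K) : R :=
  \sum_(k < K) c k * (j == k)%:R.

Definition psi_loss (R : realType) (K : nat) (c : 'I_K -> R) (s : 'I_K -> R) : R :=
  - \sum_(j < K) \sum_(k < K)
      c k * (k != j)%:R * ln (expR (s j) / \sum_(m < K) expR (s m)).

Definition input (R : realType) (N : nat)
  (Ut : N.-tuple R * N.-tuple R -> N.-tuple R) (af : N.-tuple R * N.-tuple R)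
  : N.-tuple R * N.-tuple R * N.-tuple R :=
  (af.1, af.2, Ut af).

(* a router with values in the finite set [K] is measurable iff every
   fibre is measurable *)
Definition measurable_router (R : realType) (N K : nat)
  (r : N.-tuple R * N.-tuple R * N.-tuple R -> 'I_K) : Prop :=
  forall j : 'I_K, measurable (r @^-1` [set j]).

Definition measurable_score (R : realType) (N K : nat)
  (g : 'I_K -> N.-tuple R * N.-tuple R * N.-tuple R -> R) : Prop :=
  forall j : 'I_K, measurable_fun setT (g j).

(* j is a maximiser of the score vector s (j = argmax s, ties arbitrary) *)
Definition is_argmax (R : realType) (K : nat) (s : 'I_K -> R) (j : 'I_K) : Prop :=
  forall k : 'I_K, s k <= s j.

Section Risks.
Variables (R : realType) (N K : nat).
Variable (P : probability (N.-tuple R * N.-tuple R)%type R).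
Variable (c : 'I_K -> N.-tuple R * N.-tuple R -> R).
Variable (Ut : N.-tuple R * N.-tuple R -> N.-tuple R).

Definition route_risk (r : N.-tuple R * N.-tuple R * N.-tuple R -> 'I_K)
  : \bar R :=
  (\int[P]_af (route_loss (fun k => c k af) (r (input Ut af)))%:E)%E.

Definition psi_risk (g : 'I_K -> N.-tuple R * N.-tuple R * N.-tuple R -> R)
  : \bar R :=
  (\int[P]_af (psi_loss (fun k => c k af) (fun j => g j (input Ut af)))%:E)%E.

Definition route_risk_star : \bar R :=
  ereal_inf [set route_risk r | r in [set r | measurable_router r]].

Definition psi_risk_star : \bar R :=
  ereal_inf [set psi_risk g | g in [set g | measurable_score g]].

End Risks.

(* Write w_j = sum_(k != j) c_k and W = sum_j w_j for a cost vector c >= 0.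
   Then Psi(c, s) = - sum_j w_j ln (softmax s)_j is a weighted cross-entropy
   whose minimum Psi_min over scores is attained at softmax s = w / W; the
   excess Psi - Psi_min is a Kullback-Leibler divergence, hence dominates the
   squared Hellinger distance between w and W softmax s.  An argmax r of s has
   the largest softmax weight while the cheapest expert j has the largest w_j,
   which yields the calibration inequality (c_r - min c)^2 <= 8 W (Psi - Psi_min).
   Since the costs are a.e. bounded, so is W, and AM-GM gives
   c_r - min c <= t + (8 W / t) (Psi - Psi_min) for every t > 0.  Integrating,
   surrogate risks tending to the optimum force routing risks to tend to
   E[min c], which is also the optimal routing risk; the optimal surrogate
   risk is at most E[Psi_min], as witnessed by the scores ln (w_j + eta). *)

From HB Require Import structures.
From mathcomp Require Import all_boot all_order all_algebra.
From mathcomp Require Import all_classical all_reals all_analysis measurable_realfun.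
From mathcomp Require Import ring lra.
Import Order.TTheory GRing.Theory Num.Theory numFieldNormedType.Exports.
Local Open Scope classical_set_scope.
Local Open Scope ring_scope.
Set Implicit Arguments. Unset Strict Implicit. Unset Printing Implicit Defensive.

Section CostVector.
Variables (R : realType) (K : nat).
Implicit Types (c s : 'I_K -> R) (j k : 'I_K).

Definition surrogate_weight c j : R := \sum_(k < K) c k * (k != j)%:R.

Definition surrogate_mass c : R := \sum_(j < K) surrogate_weight c j.

Definition softmax s j : R := expR (s j) / \sum_(m < K) expR (s m).

(* The infimum of [psi_loss c] over all scores, attained when [softmax s] is
   proportional to [surrogate_weight c]. *)
Definition psi_bayes c : R :=
  - \sum_(j < K) surrogate_weight c j * ln (surrogate_weight c j / surrogate_mass c).

(* [j0] only witnesses [K > 0]. *)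
Definition min_cost (j0 : 'I_K) c : R := \big[Order.min/c j0]_(j < K) c j.

Lemma sumr_expR_gt0 (j0 : 'I_K) s : 0 < \sum_(m < K) expR (s m).
Proof.
rewrite (bigD1 j0) //= ltr_wpDr ?expR_gt0 //.
by rewrite sumr_ge0 // => m _; rewrite ltW ?expR_gt0.
Qed.

Lemma route_lossE c j : route_loss c j = c j.
Proof.
rewrite /route_loss (bigD1 j) //= eqxx mulr1 big1 ?addr0 // => k kj.
by rewrite eq_sym (negbTE kj) mulr0.
Qed.

Lemma psi_lossE c s :
  psi_loss c s = - \sum_(j < K) surrogate_weight c j * ln (softmax s j).
Proof. by congr (- _); apply: eq_bigr => j _; rewrite big_distrl. Qed.

Lemma psi_loss_logsumexp c s : psi_loss c s =
  \sum_(j < K) surrogate_weight c j * (ln (\sum_(m < K) expR (s m)) - s j).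
Proof.
rewrite psi_lossE -sumrN; apply: eq_bigr => j _.
by rewrite /softmax ln_div ?posrE ?expR_gt0 ?(sumr_expR_gt0 j) // expRK -mulrN opprB.
Qed.

Lemma surrogate_weightE c j : surrogate_weight c j = \sum_(k < K) c k - c j.
Proof.
rewrite /surrogate_weight (bigD1 j) //= eqxx mulr0 add0r [in RHS](bigD1 j) //=.
by rewrite addrC addrK; apply: eq_bigr => k ->; rewrite mulr1.
Qed.

Section Nonnegative.
Variable c : 'I_K -> R.
Hypothesis c_ge0 : forall k, 0 <= c k.

Lemma surrogate_weight_ge0 j : 0 <= surrogate_weight c j.
Proof. by apply: sumr_ge0 => k _; rewrite mulr_ge0. Qed.

Lemma surrogate_mass_ge0 : 0 <= surrogate_mass c.
Proof. by apply: sumr_ge0 => j _; exact: surrogate_weight_ge0. Qed.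

Lemma surrogate_weight_le_mass j : surrogate_weight c j <= surrogate_mass c.
Proof.
rewrite /surrogate_mass (bigD1 j) //= lerDl.
by apply: sumr_ge0 => k _; exact: surrogate_weight_ge0.
Qed.

Lemma surrogate_mass_le (M : R) :
  (forall k, c k <= M) -> surrogate_mass c <= K%:R * (K%:R * M).
Proof.
move=> cM; have -> : K%:R * (K%:R * M) = \sum_(j < K) \sum_(k < K) M.
  by rewrite !sumr_const card_ord !mulr_natl.
apply: ler_sum => j _; apply: ler_sum => k _.
by case: (k != j); rewrite ?mulr1 ?mulr0 // (le_trans (c_ge0 k)).
Qed.

Lemma surrogate_mass_gt0 j : surrogate_weight c j != 0 -> 0 < surrogate_mass c.
Proof.
move=> wj_neq0; apply: lt_le_trans (surrogate_weight_le_mass j).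
by rewrite lt_def wj_neq0 surrogate_weight_ge0.
Qed.

End Nonnegative.

Lemma softmax_gt0 s j : 0 < softmax s j.
Proof. by rewrite divr_gt0 ?expR_gt0 ?(sumr_expR_gt0 j). Qed.

Lemma softmax_sum1 (j0 : 'I_K) s : \sum_(j < K) softmax s j = 1.
Proof. by rewrite -mulr_suml divff // gt_eqF ?(sumr_expR_gt0 j0). Qed.

Lemma softmax_le s i j : s i <= s j -> softmax s i <= softmax s j.
Proof. by move=> sij; rewrite ler_wpM2r ?ler_expR // invr_ge0 ltW ?(sumr_expR_gt0 i). Qed.

Lemma softmax_lnE (v : 'I_K -> R) j : (forall k, 0 < v k) ->
  softmax (fun k => ln (v k)) j = v j / \sum_(k < K) v k.
Proof.
move=> v_gt0; rewrite /softmax lnK ?posrE //.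
by under eq_bigr => k _ do rewrite lnK ?posrE //.
Qed.

Lemma min_cost_le j0 c j : min_cost j0 c <= c j.
Proof. exact: bigmin_le. Qed.

Lemma min_costE j0 c : min_cost j0 c = c [arg min_(j < j0) c j]%O.
Proof.
case: arg_minP => // i _ ci_min; apply/le_anti; rewrite min_cost_le /=.
by apply: le_bigmin => [|j _]; exact: ci_min.
Qed.

End CostVector.

Lemma ln_le_subr1 (R : realType) (x : R) : 0 < x -> ln x <= x - 1.
Proof.
by move=> x0; have := @le_ln1Dx R (x - 1); rewrite [1 + _]addrC subrK; apply; lra.
Qed.

Lemma mul_ln_div_ge (R : realType) (x y : R) : 0 <= x -> 0 < y ->
  2 * (x - Num.sqrt x * Num.sqrt y) <= x * ln (x / y).
Proof.
move=> x0 y0; have [->|x_neq0] := eqVneq x 0; first by rewrite sqrtr0 !mul0r subr0 mulr0.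
have {x0 x_neq0}x0 : 0 < x by rewrite lt_def x_neq0.
set a := Num.sqrt x; set b := Num.sqrt y.
have a0 : 0 < a by rewrite sqrtr_gt0.
have b0 : 0 < b by rewrite sqrtr_gt0.
have xa : x = a ^+ 2 by rewrite sqr_sqrtr ?ltW.
have -> : ln (x / y) = - (ln (b / a) *+ 2).
  rewrite -lnXn ?divr_gt0 // expr_div_n !sqr_sqrtr ?ltW //.
  by rewrite -lnV ?posrE ?divr_gt0 // invf_div.
have : x * ln (b / a) <= a * b - x.
  apply: le_trans (ler_wpM2l (ltW x0) (ln_le_subr1 (divr_gt0 b0 a0))) _.
  rewrite xa; suff -> : a ^+ 2 * (b / a - 1) = a * b - a ^+ 2 by [].
  by field; rewrite gt_eqF.
rewrite mulrN mulrnAr; lra.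
Qed.

Lemma sqr_sub_le_sqr_dist (R : realType) (a1 a2 b1 b2 : R) : a2 <= a1 -> b1 <= b2 ->
  (a1 - a2) ^+ 2 <= 2 * ((a1 - b1) ^+ 2 + (a2 - b2) ^+ 2).
Proof.
move=> a21 b12; have h : (a1 - a2) ^+ 2 <= ((a1 - b1) + (b2 - a2)) ^+ 2.
  by rewrite ler_sqr ?nnegrE; lra.
apply: le_trans h _; rewrite -subr_ge0.
have -> : 2 * ((a1 - b1) ^+ 2 + (a2 - b2) ^+ 2) - (a1 - b1 + (b2 - a2)) ^+ 2 =
  (a1 - b1 - (b2 - a2)) ^+ 2 by ring.
exact: sqr_ge0.
Qed.

Section SurrogateExcess.
Variables (R : realType) (K : nat) (j0 : 'I_K) (c : 'I_K -> R).
Hypothesis c_ge0 : forall k, 0 <= c k.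
Local Notation w := (surrogate_weight c).
Local Notation W := (surrogate_mass c).

Lemma psi_loss_subE s : psi_loss c s - psi_bayes c =
  \sum_(j < K) w j * (ln (w j / W) - ln (softmax s j)).
Proof.
by rewrite psi_lossE /psi_bayes opprK addrC -sumrB; apply: eq_bigr => j _; rewrite mulrBr.
Qed.

(* The excess is the Kullback-Leibler divergence of [w] from [W * softmax s],
   two vectors of total mass [W]; it dominates their squared Hellinger distance. *)
Lemma psi_excess_ge_sqr_dist s :
  \sum_(j < K) (Num.sqrt (w j) - Num.sqrt (W * softmax s j)) ^+ 2
    <= psi_loss c s - psi_bayes c.
Proof.
have W0 := surrogate_mass_ge0 c_ge0.
have -> : \sum_(j < K) (Num.sqrt (w j) - Num.sqrt (W * softmax s j)) ^+ 2 =
    \sum_(j < K) 2 * (w j - Num.sqrt (w j) * Num.sqrt (W * softmax s j)).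
  apply/eqP; rewrite -subr_eq0 -sumrB.
  under eq_bigr => j _.
    have Wsj0 : 0 <= W * softmax s j by rewrite mulr_ge0 // ltW // softmax_gt0.
    rewrite sqrrB !sqr_sqrtr ?surrogate_weight_ge0 //.
    have -> : forall u v x : R, u - x *+ 2 + v - 2 * (u - x) = v - u.
      by move=> u v x; rewrite -mulr_natl; ring.
    over.
  by rewrite sumrB -mulr_sumr (softmax_sum1 j0) mulr1 subrr.
rewrite psi_loss_subE; apply: ler_sum => j _.
have [->|wj_neq0] := eqVneq (w j) 0.
  by rewrite sqrtr0 !mul0r subr0 mulr0.
have wj0 : 0 < w j by rewrite lt_def wj_neq0 surrogate_weight_ge0.
have W_gt0 := surrogate_mass_gt0 c_ge0 wj_neq0.
have sj0 := softmax_gt0 s j.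
have wW0 : 0 < w j / W by rewrite divr_gt0.
rewrite -ln_div ?posrE // -mulrA -invfM.
by apply: mul_ln_div_ge; [exact: ltW | exact: mulr_gt0].
Qed.

Lemma psi_bayesE :
  psi_bayes c = \sum_(j < K) w j * (ln W - ln (w j)).
Proof.
rewrite /psi_bayes -sumrN; apply: eq_bigr => j _.
have [->|wj_neq0] := eqVneq (w j) 0; first by rewrite !mul0r oppr0.
have wj0 : 0 < w j by rewrite lt_def wj_neq0 surrogate_weight_ge0.
have W_gt0 := surrogate_mass_gt0 c_ge0 wj_neq0.
by rewrite ln_div ?posrE // -mulrN opprB.
Qed.

Lemma psi_bayes_le_psi_loss s : psi_bayes c <= psi_loss c s.
Proof.
rewrite -subr_ge0; apply: le_trans (psi_excess_ge_sqr_dist s).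
by apply: sumr_ge0 => j _; exact: sqr_ge0.
Qed.

Lemma psi_bayes_ge0 : 0 <= psi_bayes c.
Proof.
rewrite oppr_ge0; apply: sumr_le0 => j _.
rewrite mulr_ge0_le0 ?surrogate_weight_ge0 //; apply: ln_le0.
have [->|W_neq0] := eqVneq W 0; first by rewrite invr0 mulr0.
have W_gt0 : 0 < W by rewrite lt_def W_neq0 surrogate_mass_ge0.
by rewrite ler_pdivrMr // mul1r surrogate_weight_le_mass.
Qed.

Lemma psi_bayes_le_mass_ln : psi_bayes c <= W * ln K%:R.
Proof.
have K_gt0 : 0 < K%:R :> R by rewrite ltr0n (leq_ltn_trans _ (ltn_ord j0)).
apply: le_trans (psi_bayes_le_psi_loss (fun=> 0)) _.
have softmax0 (j : 'I_K) : softmax (fun=> 0 : R) j = K%:R^-1.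
  rewrite /softmax (eq_bigr (fun=> 1)) => [|m _]; last exact: expR0.
  by rewrite expR0 sumr_const card_ord mul1r.
rewrite psi_lossE; under eq_bigr do rewrite softmax0.
by rewrite -mulr_suml lnV ?posrE // mulrN opprK.
Qed.

(* [r0] has the largest softmax weight whereas the cheaper [j] has the larger
   weight [w j], so [sqrt (w j) - sqrt (w r0)] is bounded by two Hellinger terms. *)
Lemma route_excess_sqr_le s r0 j : is_argmax s r0 -> c j <= c r0 ->
  (c r0 - c j) ^+ 2 <= 8 * W * (psi_loss c s - psi_bayes c).
Proof.
move=> r0_max cj_le.
have W0 := surrogate_mass_ge0 c_ge0.
have E_ge := psi_excess_ge_sqr_dist s.
set E := psi_loss c s - psi_bayes c in E_ge *.
have E0 : 0 <= E by rewrite subr_ge0 psi_bayes_le_psi_loss.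
have [->|j_neq_r0] := eqVneq j r0; first by rewrite subrr expr0n /= !mulr_ge0.
set a := fun k => Num.sqrt (w k); set b := fun k => Num.sqrt (W * softmax s k).
have sqr_a k : a k ^+ 2 = w k by rewrite sqr_sqrtr ?surrogate_weight_ge0.
have a_le k : a k <= Num.sqrt W by rewrite ler_wsqrtr ?surrogate_weight_le_mass.
have a_r0j : a r0 <= a j by rewrite ler_wsqrtr // !surrogate_weightE lerB.
have b_jr0 : b j <= b r0 by rewrite ler_wsqrtr // ler_wpM2l ?softmax_le.
have two_terms : (a j - b j) ^+ 2 + (a r0 - b r0) ^+ 2 <= E.
  apply: le_trans E_ge; rewrite (bigD1 j) //= (bigD1 r0) 1?eq_sym //= addrA lerDl.
  by apply: sumr_ge0 => k _; exact: sqr_ge0.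
have diff_le : (a j - a r0) ^+ 2 <= 2 * E.
  exact: le_trans (sqr_sub_le_sqr_dist a_r0j b_jr0) (ler_wpM2l _ two_terms).
have sum_le : (a j + a r0) ^+ 2 <= 4 * W.
  rewrite -[in X in _ <= X](sqr_sqrtr W0).
  have := a_le j; have := a_le r0; have := sqrtr_ge0 (w j); have := sqrtr_ge0 (w r0).
  rewrite -/(a j) -/(a r0); nra.
have -> : c r0 - c j = (a j - a r0) * (a j + a r0).
  by rewrite -subr_sqr !sqr_a !surrogate_weightE; ring.
rewrite exprMn (_ : 8 * W * E = 2 * E * (4 * W)); last by ring.
by rewrite ler_pM ?sqr_ge0.
Qed.

(* AM-GM with parameter [t] linearises the quadratic bound above. *)
Lemma route_loss_calibration (B t : R) s r0 : W <= B -> is_argmax s r0 -> 0 < t ->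
  c r0 + 8 * B / t * psi_bayes c <= t + min_cost j0 c + 8 * B / t * psi_loss c s.
Proof.
move=> WB r0_max t0; rewrite min_costE; case: arg_minP => // j _ j_min.
have W0 := surrogate_mass_ge0 c_ge0.
have := route_excess_sqr_le r0_max (j_min r0 isT).
set D := c r0 - c j; set E := psi_loss c s - psi_bayes c => D2.
have E0 : 0 <= E by rewrite subr_ge0 psi_bayes_le_psi_loss.
have D0 : 0 <= D by rewrite subr_ge0 j_min.
have DB : D ^+ 2 <= 8 * B * E.
  by apply: le_trans D2 _; rewrite ler_wpM2r // ler_wpM2l.
have tD : t * D <= t ^+ 2 + 8 * B * E by nra.
have : D <= t + 8 * B / t * E.
  rewrite -(ler_pM2l t0) (_ : t * (t + _) = t ^+ 2 + 8 * B * E) //.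
  by field; rewrite gt_eqF.
rewrite /D /E; lra.
Qed.

Lemma psi_loss_ln_weight_le (eta : R) : 0 < eta ->
  psi_loss c (fun j => ln (w j + eta)) <= psi_bayes c + K%:R * eta.
Proof.
move=> eta0; rewrite -lerBlDl.
have W0 := surrogate_mass_ge0 c_ge0.
have w_eta0 j : 0 < w j + eta by rewrite ltr_wpDl ?surrogate_weight_ge0.
have softmaxE j : softmax (fun j => ln (w j + eta)) j = (w j + eta) / (W + K%:R * eta).
  by rewrite softmax_lnE // big_split /= sumr_const card_ord mulr_natl.
have [W_eq0|W_neq0] := eqVneq W 0.
  have w0 j : w j = 0.
    by apply/eqP; rewrite eq_le surrogate_weight_ge0 // andbT -W_eq0 surrogate_weight_le_mass.
  rewrite psi_loss_subE big1 => [|j _]; last by rewrite w0 mul0r.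
  by rewrite mulr_ge0 // ltW.
have W_gt0 : 0 < W by rewrite lt_def W_neq0.
rewrite psi_loss_subE.
have -> : K%:R * eta = \sum_(j < K) w j * (K%:R * eta / W).
  by rewrite -mulr_suml mulrCA divff ?mulr1 // gt_eqF.
apply: ler_sum => j _; rewrite softmaxE.
have [->|wj_neq0] := eqVneq (w j) 0; first by rewrite !mul0r.
have wj0 : 0 < w j by rewrite lt_def wj_neq0 surrogate_weight_ge0.
have Keta0 : 0 <= K%:R * eta by rewrite mulr_ge0 // ltW.
have WK0 : 0 < W + K%:R * eta by rewrite ltr_wpDr.
rewrite ler_pM2l // !ln_div ?posrE //.
have : ln (w j) <= ln (w j + eta) by rewrite ler_ln ?posrE // lerDl ltW.
have : ln (W + K%:R * eta) - ln W <= K%:R * eta / W.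
  rewrite -ln_div ?posrE // (_ : _ / W = 1 + K%:R * eta / W).
    by apply: le_ln1Dx; apply: lt_le_trans (ltrN10 R) _; rewrite divr_ge0 // ltW.
  by field; rewrite gt_eqF.
lra.
Qed.

End SurrogateExcess.

Section Measurability.
Context (d : measure_display) (T : measurableType d) (R : realType).

Lemma measurable_vsub N (f g : T -> N.-tuple R) :
  measurable_fun setT f -> measurable_fun setT g ->
  measurable_fun setT (fun x => vsub (f x) (g x)).
Proof.
move=> mf mg; apply/measurable_fun_tnthP => i.
rewrite (_ : _ \o _ = fun x => tnth (f x) i - tnth (g x) i).
  by apply: measurable_funB; exact: (measurable_fun_tnthP _).1.
by apply/funext => x /=; rewrite tnth_mktuple.
Qed.

Lemma measurable_matvec N (M : T -> 'M[R]_N) (v : T -> N.-tuple R) :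
  (forall i j, measurable_fun setT (fun x => M x i j)) -> measurable_fun setT v ->
  measurable_fun setT (fun x => matvec (M x) (v x)).
Proof.
move=> mM mv; apply/measurable_fun_tnthP => i.
rewrite (_ : _ \o _ = fun x => \sum_(j < N) M x i j * tnth (v x) j).
  apply: measurable_sum => j; apply: measurable_funM; first exact: mM.
  exact: (measurable_fun_tnthP _).1.
by apply/funext => x /=; rewrite tnth_mktuple.
Qed.

Lemma measurable_sqnorm N (v : T -> N.-tuple R) :
  measurable_fun setT v -> measurable_fun setT (fun x => sqnorm (v x)).
Proof.
move=> mv; apply: measurable_sum => i; apply: measurable_funX.
exact: (measurable_fun_tnthP _).1.
Qed.

Variables (K : nat) (c : 'I_K -> T -> R).
Hypothesis mc : forall j, measurable_fun setT (c j).

Lemma measurable_min_cost j0 : measurable_fun setT (fun x => min_cost j0 (c^~ x)).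
Proof.
suff : forall s : seq 'I_K,
    measurable_fun setT (fun x => \big[Order.min/c j0 x]_(j <- s) c j x) by apply.
elim=> [|j s IHs]; under eq_fun do rewrite ?big_nil ?big_cons; first exact: mc.
exact: measurable_minr.
Qed.

Lemma measurable_router_cost (rho : T -> 'I_K) :
  (forall j, measurable (rho @^-1` [set j])) ->
  measurable_fun setT (fun x => c (rho x) x).
Proof.
move=> mrho; under eq_fun do rewrite -(route_lossE (c^~ _)) /route_loss.
apply: measurable_sum => k; apply: measurable_funM; first exact: mc.
rewrite (_ : (fun x => _) = \1_(rho @^-1` [set k])).
  exact: measurable_indic.
apply/funext => x; rewrite indicE /=.
by case: eqP => [<-|ne]; [rewrite mem_set | rewrite memNset].
Qed.

Lemma measurable_surrogate_weight j :
  measurable_fun setT (fun x => surrogate_weight (c^~ x) j).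
Proof. by apply: measurable_sum => k; apply: measurable_funM. Qed.

Lemma measurable_psi_loss (s : 'I_K -> T -> R) : (forall j, measurable_fun setT (s j)) ->
  measurable_fun setT (fun x => psi_loss (c^~ x) (s^~ x)).
Proof.
move=> ms; under eq_fun do rewrite psi_loss_logsumexp.
apply: measurable_sum => j; apply: measurable_funM; first exact: measurable_surrogate_weight.
apply: measurable_funB => //; apply: measurableT_comp; first exact: measurable_ln.
by apply: measurable_sum => m; apply: measurableT_comp; [exact: measurable_expR|].
Qed.

Lemma measurable_psi_bayes : (forall j x, 0 <= c j x) ->
  measurable_fun setT (fun x => psi_bayes (c^~ x)).
Proof.
move=> c_ge0; under eq_fun do rewrite psi_bayesE //.
apply: measurable_sum => j; apply: measurable_funM; first exact: measurable_surrogate_weight.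
apply: measurable_funB; apply: measurableT_comp; try exact: measurable_ln.
  by apply: measurable_sum => k; exact: measurable_surrogate_weight.
exact: measurable_surrogate_weight.
Qed.

End Measurability.

Lemma cvg_of_excess_le (R : realType) (a : nat -> R) (psi : nat -> \bar R)
    (m q l : R) (k : R -> R) :
  l <= q -> (psi n @[n --> \oo] --> l%:E) -> (forall n, m <= a n) ->
  (forall t, 0 < t -> 0 <= k t) ->
  (forall t n, 0 < t ->
    ((a n)%:E + (k t)%:E * q%:E <= t%:E + m%:E + (k t)%:E * psi n)%E) ->
  a n @[n --> \oo] --> m.
Proof.
move=> lq /fine_cvgP[psi_fin psi_cvg] m_le k_ge0 a_le.
apply/cvgrPdist_le => e e0; set t := e / 2.
have t0 : 0 < t by rewrite divr_gt0.
have kt0 := k_ge0 t t0.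
set eps := t / (k t + 1).
have eps0 : 0 < eps by rewrite divr_gt0 // ltr_wpDl.
have keps : k t * eps <= t.
  by rewrite /eps mulrA ler_pdivrMr ?ltr_wpDl // mulrDr mulr1 mulrC lerDl ltW.
near=> n.
have fin_n : psi n \is a fin_num by near: n.
have : `|l - fine (psi n)| <= eps by near: n; exact: (cvgrPdist_le _ _).1 psi_cvg _ eps0.
rewrite ler_norml => /andP[psi_le _].
have := a_le t n t0; rewrite -(fineK fin_n) -!EFinM -!EFinD lee_fin => h.
have : k t * (fine (psi n) - q) <= k t * eps by rewrite ler_wpM2l //; lra.
have et : e = t + t by rewrite /t -splitr.
rewrite ler0_norm ?subr_le0 // opprB; lra.
Unshelve. all: by end_near.
Qed.

Section Integrals.
Context (d : measure_display) (T : measurableType d) (R : realType).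
Implicit Types (f h : T -> R).

Lemma ge0_integralDZl (mu : measure T R) f h (k : R) :
  (forall x, 0 <= f x) -> (forall x, 0 <= h x) -> 0 <= k ->
  measurable_fun setT f -> measurable_fun setT h ->
  (\int[mu]_x (f x + k * h x)%:E =
    \int[mu]_x (f x)%:E + k%:E * \int[mu]_x (h x)%:E)%E.
Proof.
move=> f0 h0 k0 mf mh; under eq_integral do rewrite EFinD.
rewrite ge0_integralD //; last 4 first.
- by move=> x _; rewrite lee_fin.
- exact/measurable_EFinP.
- by move=> x _; rewrite lee_fin mulr_ge0.
- by apply/measurable_EFinP; exact: measurable_funM.
under [X in (_ + X)%E]eq_integral do rewrite EFinM.
by rewrite ge0_integralZl_EFin //; [move=> x _; rewrite lee_fin | exact/measurable_EFinP].
Qed.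

Variable P : probability T R.

Lemma ge0_integral_cstD f (t : R) : (forall x, 0 <= f x) -> 0 <= t ->
  measurable_fun setT f ->
  (\int[P]_x (t + f x)%:E = t%:E + \int[P]_x (f x)%:E)%E.
Proof.
move=> f0 t0 mf; under eq_integral do rewrite EFinD.
rewrite ge0_integralD // => [|x _|]; last exact/measurable_EFinP.
  by rewrite integral_cst //= probability_setT mule1.
by rewrite lee_fin.
Qed.

Lemma ge0_ae_bounded_integral_fin_num f (M : R) : (forall x, 0 <= f x) ->
  measurable_fun setT f -> {ae P, forall x, f x <= M} ->
  (\int[P]_x (f x)%:E)%E \is a fin_num.
Proof.
move=> f0 mf fM; rewrite ge0_fin_numE; last by apply: integral_ge0 => x _; rewrite lee_fin.
apply: (@le_lt_trans _ _ (\int[P]_x (cst `|M|%:E x))%E); last first.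
  by rewrite integral_cst //= probability_setT mule1 ltey.
apply: ae_ge0_le_integral => //.
- by move=> x _; rewrite lee_fin.
- exact/measurable_EFinP.
- by move=> x _; rewrite lee_fin.
by apply: filterS fM => x fxM _; rewrite /= lee_fin (le_trans fxM) ?ler_norm.
Qed.

End Integrals.

Section BayesConsistency.
Context (d : measure_display) (X : measurableType d) (R : realType).
Variables (P : probability X R) (K : nat) (j0 : 'I_K) (c : 'I_K -> X -> R) (Ebar : R).
Hypothesis c_ge0 : forall j x, 0 <= c j x.
Hypothesis mc : forall j, measurable_fun setT (c j).
Hypothesis c_lt : {ae P, forall x j, c j x < Ebar}.

Let B : R := K%:R * (K%:R * `|Ebar|).

Lemma ae_surrogate_mass_le : {ae P, forall x, surrogate_mass (c^~ x) <= B}.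
Proof.
apply: filterS c_lt => x cx; apply: surrogate_mass_le => // k.
exact: le_trans (ltW (cx k)) (ler_norm _).
Qed.

Lemma min_cost_ge0 x : 0 <= min_cost j0 (c^~ x).
Proof. by rewrite min_costE. Qed.

Lemma integral_min_cost_fin_num :
  (\int[P]_x (min_cost j0 (c^~ x))%:E)%E \is a fin_num.
Proof.
apply: (ge0_ae_bounded_integral_fin_num (M := Ebar)) => //.
- exact: min_cost_ge0.
- exact: measurable_min_cost.
by apply: filterS c_lt => x cx; exact: le_trans (min_cost_le _ _ j0) (ltW (cx j0)).
Qed.

Lemma integral_router_cost_fin_num (rho : X -> 'I_K) :
  (forall j, measurable (rho @^-1` [set j])) ->
  (\int[P]_x (c (rho x) x)%:E)%E \is a fin_num.
Proof.
move=> mrho; apply: (ge0_ae_bounded_integral_fin_num (M := Ebar)) => //.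
- exact: measurable_router_cost.
by apply: filterS c_lt => x cx; exact: ltW.
Qed.

Lemma integral_psi_bayes_fin_num :
  (\int[P]_x (psi_bayes (c^~ x))%:E)%E \is a fin_num.
Proof.
apply: (ge0_ae_bounded_integral_fin_num (M := B * ln K%:R)) => //.
- by move=> x; exact: psi_bayes_ge0.
- exact: measurable_psi_bayes.
apply: filterS ae_surrogate_mass_le => x WB.
apply: le_trans (psi_bayes_le_mass_ln j0 _) _ => //.
by rewrite ler_wpM2r // ln_ge0 // ler1n (leq_ltn_trans _ (ltn_ord j0)).
Qed.

Lemma min_cost_integral_le (rho : X -> 'I_K) :
  (forall j, measurable (rho @^-1` [set j])) ->
  (\int[P]_x (min_cost j0 (c^~ x))%:E <= \int[P]_x (c (rho x) x)%:E)%E.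
Proof.
move=> mrho; apply: ge0_le_integral => //.
- by move=> x _; rewrite lee_fin min_cost_ge0.
- by apply/measurable_EFinP; exact: measurable_min_cost.
- by apply/measurable_EFinP; exact: measurable_router_cost.
by move=> x _; rewrite lee_fin min_cost_le.
Qed.

Lemma router_risk_calibration (s : 'I_K -> X -> R) (rho : X -> 'I_K) (t : R) :
  (forall j, measurable_fun setT (s j)) -> (forall j, measurable (rho @^-1` [set j])) ->
  (forall x, is_argmax (s^~ x) (rho x)) -> 0 < t ->
  (\int[P]_x (c (rho x) x)%:E + (8 * B / t)%:E * \int[P]_x (psi_bayes (c^~ x))%:E
    <= t%:E + \int[P]_x (min_cost j0 (c^~ x))%:E
       + (8 * B / t)%:E * \int[P]_x (psi_loss (c^~ x) (s^~ x))%:E)%E.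
Proof.
move=> ms mrho rho_max t0.
have B0 : 0 <= B by rewrite /B !mulr_ge0.
have k0 : 0 <= 8 * B / t by rewrite divr_ge0 ?mulr_ge0 // ltW.
have bayes0 x : 0 <= psi_bayes (c^~ x) by exact: psi_bayes_ge0.
have psi0 x : 0 <= psi_loss (c^~ x) (s^~ x).
  exact: le_trans (bayes0 x) (psi_bayes_le_psi_loss j0 _ _).
have mbayes := measurable_psi_bayes mc c_ge0.
have mpsi := measurable_psi_loss mc ms.
have mmin := measurable_min_cost mc j0.
have mrc := measurable_router_cost mc mrho.
have t_ge0 := ltW t0.
rewrite -ge0_integralDZl // -ge0_integral_cstD //; last exact: min_cost_ge0.
rewrite -ge0_integralDZl //; last 2 first.
- by move=> x; rewrite addr_ge0 ?min_cost_ge0.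
- by apply: measurable_funD => //; exact: measurable_cst.
apply: ae_ge0_le_integral => //.
- by move=> x _; rewrite lee_fin; apply: addr_ge0; [exact: c_ge0 | exact: mulr_ge0].
- by apply/measurable_EFinP; apply: measurable_funD => //; exact: measurable_funM.
- move=> x _; rewrite lee_fin; apply: addr_ge0; last exact: mulr_ge0.
  by apply: addr_ge0 => //; exact: min_cost_ge0.
- apply/measurable_EFinP; apply: measurable_funD; last exact: measurable_funM.
  by apply: measurable_funD => //; exact: measurable_cst.
apply: filterS ae_surrogate_mass_le => x WB _; rewrite lee_fin.
exact: route_loss_calibration.
Qed.

Lemma psi_ln_weight_integral_le (eta : R) : 0 < eta ->
  (\int[P]_x (psi_loss (c^~ x) (fun j => ln (surrogate_weight (c^~ x) j + eta)))%:E
    <= \int[P]_x (psi_bayes (c^~ x))%:E + (K%:R * eta)%:E)%E.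
Proof.
move=> eta0; have Keta0 : 0 <= K%:R * eta by rewrite mulr_ge0 // ltW.
rewrite addeC -ge0_integral_cstD //; last 2 first.
- by move=> x; exact: psi_bayes_ge0.
- exact: measurable_psi_bayes.
apply: ge0_le_integral => //.
- move=> x _; rewrite lee_fin.
  exact: le_trans (psi_bayes_ge0 _) (psi_bayes_le_psi_loss j0 _ _).
- apply/measurable_EFinP; apply: measurable_psi_loss => // j.
  apply: measurableT_comp; first exact: measurable_ln.
  by apply: measurable_funD; [exact: measurable_surrogate_weight | exact: measurable_cst].
- apply/measurable_EFinP; apply: measurable_funD; first exact: measurable_cst.
  exact: measurable_psi_bayes.
by move=> x _; rewrite lee_fin addrC; exact: psi_loss_ln_weight_le.
Qed.

Theorem router_risk_cvg (s : nat -> 'I_K -> X -> R) (rho : nat -> X -> 'I_K) (l : R) :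
  (forall n j, measurable_fun setT (s n j)) ->
  (forall n j, measurable (rho n @^-1` [set j])) ->
  (forall n x, is_argmax (s n ^~ x) (rho n x)) ->
  (l%:E <= \int[P]_x (psi_bayes (c^~ x))%:E)%E ->
  (\int[P]_x (psi_loss (c^~ x) (s n ^~ x))%:E)%E @[n --> \oo] --> l%:E ->
  (\int[P]_x (c (rho n x) x)%:E)%E @[n --> \oo] -->
    (\int[P]_x (min_cost j0 (c^~ x))%:E)%E.
Proof.
move=> ms mrho rho_max l_le psi_cvg.
have B0 : 0 <= B by rewrite /B !mulr_ge0.
rewrite -(fineK integral_min_cost_fin_num); apply/fine_cvgP; split.
  by apply: nearW => n; exact: integral_router_cost_fin_num.
apply: (cvg_of_excess_le (q := fine (\int[P]_x (psi_bayes (c^~ x))%:E)%E)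
  (k := fun t => 8 * B / t) _ psi_cvg) => [|n|t t0|t n t0].
- by rewrite -lee_fin fineK // integral_psi_bayes_fin_num.
- rewrite fine_le ?integral_min_cost_fin_num ?integral_router_cost_fin_num //.
  exact: min_cost_integral_le.
- by rewrite divr_ge0 ?mulr_ge0 // ltW.
rewrite /= !fineK ?integral_min_cost_fin_num ?integral_router_cost_fin_num //.
  exact: router_risk_calibration.
exact: integral_psi_bayes_fin_num.
Qed.

End BayesConsistency.

Section RouterRisks.
Variables (R : realType) (N K : nat) (j0 : 'I_K).
Local Notation sample := (N.-tuple R * N.-tuple R)%type.
Local Notation input_type := (sample * N.-tuple R)%type.
Variables (P : probability sample R) (c : 'I_K -> sample -> R) (Ut : sample -> N.-tuple R).
Hypothesis c_ge0 : forall j x, 0 <= c j x.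
Hypothesis mc : forall j, measurable_fun setT (c j).
Hypothesis mUt : measurable_fun setT Ut.

Lemma measurable_input : measurable_fun setT (input Ut).
Proof.
exact: measurable_fun_pair (measurable_fun_pair measurable_fst measurable_snd) mUt.
Qed.

Lemma measurable_router_input (r : input_type -> 'I_K) :
  measurable_router r ->
  forall j, measurable ((fun x => r (input Ut x)) @^-1` [set j]).
Proof.
move=> mr j; rewrite -[X in measurable X]setTI.
exact: (measurable_input measurableT (mr j)).
Qed.

Lemma route_riskE (r : input_type -> 'I_K) :
  route_risk P c Ut r = (\int[P]_x (c (r (input Ut x)) x)%:E)%E.
Proof. by apply: eq_integral => x _; rewrite route_lossE. Qed.

Lemma route_risk_star_le (r : input_type -> 'I_K) :
  measurable_router r ->
  (route_risk_star P c Ut <= route_risk P c Ut r)%E.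
Proof. by move=> mr; apply: ereal_inf_lbound; exists r. Qed.

Lemma min_cost_integral_le_route_risk_star :
  (\int[P]_x (min_cost j0 (c^~ x))%:E <= route_risk_star P c Ut)%E.
Proof.
apply/ereal_infP => _ [r mr <-]; rewrite route_riskE.
by apply: min_cost_integral_le => //; exact: measurable_router_input.
Qed.

Lemma psi_risk_star_ge0 : (0 <= psi_risk_star P c Ut)%E.
Proof.
apply/ereal_infP => _ [g _ <-]; apply: integral_ge0 => x _; rewrite lee_fin.
exact: le_trans (psi_bayes_ge0 _) (psi_bayes_le_psi_loss j0 _ _).
Qed.

(* The softmax of the scores [ln (w j + eta)] approaches [w / W] as [eta -> 0]. *)
Lemma psi_risk_star_le :
  (psi_risk_star P c Ut <= \int[P]_x (psi_bayes (c^~ x))%:E)%E.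
Proof.
apply/lee_addgt0Pr => e e0.
have K_gt0 : 0 < K%:R :> R by rewrite ltr0n (leq_ltn_trans _ (ltn_ord j0)).
pose eta := e / K%:R; have eta0 : 0 < eta by rewrite divr_gt0.
pose g j (x : input_type) :=
  ln (surrogate_weight (c^~ x.1) j + eta).
have mg : measurable_score g.
  move=> j; apply: measurableT_comp; first exact: measurable_ln.
  apply: measurable_funD; last exact: measurable_cst.
  apply: (measurable_surrogate_weight (c := fun k x => c k x.1)) => k.
  exact: measurableT_comp (mc k) measurable_fst.
apply: (@le_trans _ _ (psi_risk P c Ut g)); first by apply: ereal_inf_lbound; exists g.
have -> : e = K%:R * eta by rewrite mulrC divfK ?gt_eqF.
rewrite (_ : psi_risk P c Ut g = \int[P]_x
    (psi_loss (c^~ x) (fun j => ln (surrogate_weight (c^~ x) j + eta)))%:E)%E.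
  exact: psi_ln_weight_integral_le.
by apply: eq_integral => -[a f].
Qed.

Lemma route_risk_starE (r : nat -> input_type -> 'I_K) :
  (forall n, measurable_router (r n)) ->
  route_risk P c Ut (r n) @[n --> \oo] --> (\int[P]_x (min_cost j0 (c^~ x))%:E)%E ->
  route_risk_star P c Ut = (\int[P]_x (min_cost j0 (c^~ x))%:E)%E.
Proof.
move=> mr r_cvg; apply/le_anti/andP; split.
  2: exact: min_cost_integral_le_route_risk_star.
rewrite -(cvg_lim _ r_cvg) //; apply: lime_ge; first exact: cvgP r_cvg.
by apply: nearW => n; exact: route_risk_star_le.
Qed.

Variable Ebar : R.
Hypothesis c_lt : {ae P, forall x j, c j x < Ebar}.

Lemma psi_risk_star_fin_num : psi_risk_star P c Ut \is a fin_num.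
Proof.
rewrite ge0_fin_numE ?psi_risk_star_ge0 //; apply: le_lt_trans psi_risk_star_le _.
have bayes0 : (0 <= \int[P]_x (psi_bayes (c^~ x))%:E)%E.
  by apply: integral_ge0 => x _; rewrite lee_fin; exact: psi_bayes_ge0.
by rewrite -ge0_fin_numE // (integral_psi_bayes_fin_num j0 c_ge0 mc c_lt).
Qed.

Theorem route_risk_cvg (g : nat -> 'I_K -> input_type -> R)
    (r : nat -> input_type -> 'I_K) :
  (forall n, measurable_score (g n)) -> (forall n, measurable_router (r n)) ->
  (forall n x, is_argmax (fun j => g n j x) (r n x)) ->
  psi_risk P c Ut (g n) @[n --> \oo] --> psi_risk_star P c Ut ->
  route_risk P c Ut (r n) @[n --> \oo] --> (\int[P]_x (min_cost j0 (c^~ x))%:E)%E.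
Proof.
move=> mg mr r_max; rewrite -(fineK psi_risk_star_fin_num) => psi_cvg.
rewrite (_ : (fun n => _) = fun n => \int[P]_x (c (r n (input Ut x)) x)%:E)%E; last first.
  by apply/funext => n; exact: route_riskE.
apply: (router_risk_cvg c_ge0 mc c_lt _ (fun n => measurable_router_input (mr n))
  (fun n x => r_max n _) _ psi_cvg).
- by move=> n j; exact: measurableT_comp (mg n j) measurable_input.
by rewrite fineK ?psi_risk_star_fin_num // psi_risk_star_le.
Qed.

End RouterRisks.

Lemma sqnorm_ge0 (R : realType) N (v : N.-tuple R) : 0 <= sqnorm v.
Proof. by apply: sumr_ge0 => i _; exact: sqr_ge0. Qed.

Lemma measurable_cost (R : realType) (N K : nat) (L : N.-tuple R -> 'M[R]_N)
    (C : 'I_K -> N.-tuple R -> N.-tuple R)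
    (G Ut : N.-tuple R * N.-tuple R -> N.-tuple R) j :
  (forall i k, measurable_fun setT (fun a => L a i k)) ->
  measurable_fun setT G -> measurable_fun setT Ut -> measurable_fun setT (C j) ->
  measurable_fun setT (cost L C G Ut j).
Proof.
move=> mL mG mUt mC; have mw := measurable_vsub mG mUt.
apply/measurable_sqnorm/measurable_vsub => //; apply: measurableT_comp mC _.
by apply: measurable_matvec => // i k; exact: measurableT_comp (mL i k) measurable_fst.
Qed.

Theorem theorem2 (R : realType) (N K : nat) (hN : (0 < N)%N) (hK : (0 < K)%N)
  (P : probability (N.-tuple R * N.-tuple R)%type R)
  (L : N.-tuple R -> 'M[R]_N)
  (hL : forall i j : 'I_N, measurable_fun setT (fun a => L a i j))
  (G Ut : N.-tuple R * N.-tuple R -> N.-tuple R)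
  (hG : measurable_fun setT G) (hUt : measurable_fun setT Ut)
  (C : 'I_K -> N.-tuple R -> N.-tuple R)
  (hC : forall j, measurable_fun setT (C j))
  (Emin Ebar : R) (hEmin : 0 < Emin)
  (hbounds : {ae P, forall af,
      (forall j : 'I_K, cost L C G Ut j af < Ebar) /\
      (exists j : 'I_K, Emin < cost L C G Ut j af)})
  (g : nat -> 'I_K -> N.-tuple R * N.-tuple R * N.-tuple R -> R)
  (hg : forall n, measurable_score (g n))
  (r : nat -> N.-tuple R * N.-tuple R * N.-tuple R -> 'I_K)
  (hr_meas : forall n, measurable_router (r n))
  (hr_argmax : forall n x, is_argmax (fun j => g n j x) (r n x))
  (hconv : psi_risk P (cost L C G Ut) Ut (g n) @[n --> \oo] -->
           psi_risk_star P (cost L C G Ut) Ut) :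
  route_risk P (cost L C G Ut) Ut (r n) @[n --> \oo] -->
    route_risk_star P (cost L C G Ut) Ut.
Proof.
set c := cost L C G Ut; pose j0 := Ordinal hK.
have c_ge0 j af : 0 <= c j af by exact: sqnorm_ge0.
have mc j : measurable_fun setT (c j) by exact: measurable_cost.
have c_lt : {ae P, forall af j, c j af < Ebar} by apply: filterS hbounds => af [].
have route_cvg := route_risk_cvg (j0 := j0) c_ge0 mc hUt c_lt hg hr_meas hr_argmax hconv.
by rewrite (route_risk_starE c_ge0 mc hUt hr_meas route_cvg).
Qed.
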